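(* Let $L$ be a cosimplicial group, $b\in Z^1(L)$, and $h_b\colon F\to L$ the cosimplicial morphism with $h_b^1(a_1)=b$. Then the square \[\begin{array}{ccc}F&\xrightarrow{\iota_+}&F^+\\ {\scriptstyle h_b}\downarrow&&\downarrow{\scriptstyle \mathrm{Id}*h_b}\\ L&\xrightarrow{\iota_b}&L^b\end{array}\] is a pushout in the category of cosimplicial groups.
   Context: $F$ is the cosimplicial group with $F_n$ free on $a_1,\dots,a_n$, cofaces $d^0(a_j)=a_{j+1}$; for $1\le i\le n-1$, $d^i(a_j)=a_j$ ($j<i$), $d^i(a_i)=a_ia_{i+1}$, $d^i(a_j)=a_{j+1}$ ($j>i$); $d^n(a_j)=a_j$; codegeneracies $s^i(a_j)=a_j$ ($j\le i$), $s^i(a_{i+1})=e$, $s^i(a_j)=a_{j-1}$ ($j>i+1$). $Z^1(L)=\{b\in L_1: d^2(b)d^0(b)=d^1(b)\}$; cosimplicial morphisms $F\to L$ correspond bijectively to $Z^1(L)$ via $h\mapsto h^1(a_1)$. Construction of $L^b$ for $b\in Z^1(L)$: let $\overline F_0$ be the infinite cyclic group on $a_0$; put $b_1=b$, $b_{n+1}=d^{n+1}(b_n)$. Then $L^b_n=\overline F_0*L_n$ (free product), codegeneracies $s^i_b=\mathrm{Id}*s^i$, cofaces $d^i_b=\mathrm{Id}*d^i$ for $i>0$, and $d^0_b\colon L^b_{n-1}\to L^b_n$ is $d^0$ on $L_{n-1}$ and sends $a_0\mapsto a_0b_n$. $\iota_b\colon L\hookrightarrow L^b$ is induced by the inclusions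 $L_n\hookrightarrow\overline F_0*L_n$. $F^+:=F^{a_1}$ (note $a_1\in Z^1(F)$), with $\iota_+:=\iota_{a_1}$; $\mathrm{Id}*h_b\colon F^+\to L^b$ is the identity on $\overline F_0$ and $h_b$ on $F_n$. *)

(* Groups here are possibly
   infinite, so we use setoid groups: a carrier with an equivalence
   relation [geqv] and operations. *)
From mathcomp Require Import all_boot.
Set Implicit Arguments. Unset Strict Implicit. Unset Printing Implicit Defensive.

Record grp := Grp {
  gcar :> Type;
  geqv : gcar -> gcar -> Prop;
  gmul : gcar -> gcar -> gcar;
  ginv : gcar -> gcar;
  gone : gcar }.
Arguments gone {g}.

Record is_group (G : grp) : Prop := {
  geq_refl : forall x : G, geqv x x;
  geq_sym : forall x y : G, geqv x y -> geqv y x;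
  geq_trans : forall x y z : G, geqv x y -> geqv y z -> geqv x z;
  gmul_proper : forall x x' y y' : G, geqv x x' -> geqv y y' -> geqv (gmul x y) (gmul x' y');
  ginv_proper : forall x x' : G, geqv x x' -> geqv (ginv x) (ginv x');
  gmulA : forall x y z : G, geqv (gmul (gmul x y) z) (gmul x (gmul y z));
  gmul1l : forall x : G, geqv (gmul gone x) x;
  gmul1r : forall x : G, geqv (gmul x gone) x;
  gmulVl : forall x : G, geqv (gmul (ginv x) x) gone;
  gmulVr : forall x : G, geqv (gmul x (ginv x)) gone }.

Definition is_hom (G H : grp) (f : G -> H) : Prop :=
  (forall x y : G, geqv x y -> geqv (f x) (f y)) /\
  (forall x y : G, geqv (f (gmul x y)) (gmul (f x) (f y))).

(* [cof n i : C n -> C n.+1] is the coface d^i (0 <= i <= n+1);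
   [codeg n i : C n.+1 -> C n] is the codegeneracy s^i (0 <= i <= n).
   Values for out-of-range indices are irrelevant. *)
Record cgrp := CGrp {
  cG : nat -> grp;
  cof : forall n, nat -> cG n -> cG n.+1;
  codeg : forall n, nat -> cG n.+1 -> cG n }.
Arguments cof {c} n i _.
Arguments codeg {c} n i _.

Record is_cosimplicial_group (C : cgrp) : Prop := {
  cs_group : forall n, is_group (cG C n);
  cs_cof_hom : forall n i, i <= n.+1 -> is_hom (@cof C n i);
  cs_codeg_hom : forall n i, i <= n -> is_hom (@codeg C n i);
  cs_dd : forall n i j (x : cG C n), i < j -> j <= n.+2 ->
      geqv (cof n.+1 j (cof n i x)) (cof n.+1 i (cof n j.-1 x));
  cs_sd_lt : forall n i j (x : cG C n.+1), i < j -> j <= n.+1 ->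
      geqv (codeg n.+1 j (cof n.+1 i x)) (cof n i (codeg n j.-1 x));
  cs_sd_eq : forall n j (x : cG C n), j <= n ->
      geqv (codeg n j (cof n j x)) x;
  cs_sd_eqS : forall n j (x : cG C n), j <= n ->
      geqv (codeg n j (cof n j.+1 x)) x;
  cs_sd_gt : forall n i j (x : cG C n.+1), j.+1 < i -> i <= n.+2 ->
      geqv (codeg n.+1 j (cof n.+1 i x)) (cof n i.-1 (codeg n j x));
  cs_ss : forall n i j (x : cG C n.+2), i <= j -> j <= n ->
      geqv (codeg n j (codeg n.+1 i x)) (codeg n i (codeg n.+1 j.+1 x)) }.

Definition cmap (C D : cgrp) := forall n, cG C n -> cG D n.

Definition is_cmorph (C D : cgrp) (f : cmap C D) : Prop :=
  (forall n, is_hom (f n)) /\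
  (forall n i (x : cG C n), i <= n.+1 -> geqv (f n.+1 (cof n i x)) (cof n i (f n x))) /\
  (forall n i (x : cG C n.+1), i <= n -> geqv (f n (codeg n i x)) (codeg n i (f n.+1 x))).

Definition ccomp (A B C : cgrp) (g : cmap B C) (f : cmap A B) : cmap A C :=
  fun n x => g n (f n x).

Definition cmap_eq (C D : cgrp) (f g : cmap C D) : Prop :=
  forall n (x : cG C n), geqv (f n x) (g n x).

Definition is_pushout (A B C D : cgrp) (top : cmap A B) (left : cmap A C)
    (right : cmap B D) (bot : cmap C D) : Prop :=
  [/\ is_cosimplicial_group A, is_cosimplicial_group B,
      is_cosimplicial_group C & is_cosimplicial_group D] /\
  [/\ is_cmorph top, is_cmorph left, is_cmorph right & is_cmorph bot] /\
  cmap_eq (ccomp right top) (ccomp bot left) /\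
  (forall (M : cgrp), is_cosimplicial_group M ->
   forall (u : cmap B M) (v : cmap C M),
     is_cmorph u -> is_cmorph v -> cmap_eq (ccomp u top) (ccomp v left) ->
     exists w : cmap D M,
       [/\ is_cmorph w, cmap_eq (ccomp w right) u, cmap_eq (ccomp w bot) v &
           forall w' : cmap D M, is_cmorph w' ->
             cmap_eq (ccomp w' right) u -> cmap_eq (ccomp w' bot) v ->
             cmap_eq w' w]).

(* A word over letters A: (a, true) = a, (a, false) = a^-1. *)
Definition winv (A : Type) (w : seq (A * bool)) : seq (A * bool) :=
  rev (map (fun p => (p.1, ~~ p.2)) w).

Definition wext (A : Type) (H : grp) (phi : A -> H) (w : seq (A * bool)) : H :=
  foldr (fun p acc => gmul (if p.2 then phi p.1 else ginv (phi p.1)) acc) gone w.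

Inductive frel (A : Type) : seq (A * bool) -> seq (A * bool) -> Prop :=
| fr_refl w : frel w w
| fr_sym w w' : frel w w' -> frel w' w
| fr_trans w1 w2 w3 : frel w1 w2 -> frel w2 w3 -> frel w1 w3
| fr_cancel u v a s : frel (u ++ (a, s) :: (a, ~~ s) :: v) (u ++ v).

(* free group F_n on a_1..a_n; the letter o : 'I_n stands for a_(o+1) *)
Definition Fgrp (n : nat) : grp :=
  @Grp (seq ('I_n * bool)) (@frel 'I_n) cat (@winv 'I_n) [::].

(* the generator a_j of F_m (the empty word if j is out of range 1..m) *)
Definition fgen (m j : nat) : Fgrp m :=
  match j with
  | 0 => [::]
  | j'.+1 => oapp (fun o : 'I_m => [:: (o, true)]) [::] (insub j')
  end.

Definition Fcof (n i : nat) : Fgrp n -> Fgrp n.+1 :=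
  @wext _ (Fgrp n.+1) (fun o : 'I_n =>
    let j := (nat_of_ord o).+1 in
    if j < i then fgen n.+1 j
    else if j == i then (fgen n.+1 j ++ fgen n.+1 j.+1 : Fgrp n.+1)
    else fgen n.+1 j.+1).

Definition Fcodeg (n i : nat) : Fgrp n.+1 -> Fgrp n :=
  @wext _ (Fgrp n) (fun o : 'I_n.+1 =>
    let j := (nat_of_ord o).+1 in
    if j <= i then fgen n j
    else if j == i.+1 then ([::] : Fgrp n)
    else fgen n j.-1).

Definition Fc : cgrp := @CGrp Fgrp Fcof Fcodeg.

(* Letters: None = a_0 (generator of the infinite cyclic group \bar F_0),
   Some g = g in G.  Equality: congruence generated by free cancellation and
   the relations of G. *)
Inductive prel (G : grp) : seq (option G * bool) -> seq (option G * bool) -> Prop :=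
| pr_refl w : prel w w
| pr_sym w w' : prel w w' -> prel w' w
| pr_trans w1 w2 w3 : prel w1 w2 -> prel w2 w3 -> prel w1 w3
| pr_cancel u v a s : prel (u ++ (a, s) :: (a, ~~ s) :: v) (u ++ v)
| pr_mul u v (g h : G) :
    prel (u ++ (Some g, true) :: (Some h, true) :: v) (u ++ (Some (gmul g h), true) :: v)
| pr_one u v : prel (u ++ (Some (@gone G), true) :: v) (u ++ v)
| pr_inv u v (g : G) : prel (u ++ (Some g, false) :: v) (u ++ (Some (ginv g), true) :: v)
| pr_eq u v (g g' : G) : geqv g g' -> prel (u ++ (Some g, true) :: v) (u ++ (Some g', true) :: v).

Definition FP (G : grp) : grp :=
  @Grp (seq (option G * bool)) (@prel G) cat (@winv (option G)) [::].

Definition idstar_map (G H : grp) (f : G -> H) : FP G -> FP H :=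
  @wext _ (FP H) (fun a : option G => match a with
        | None => ([:: (None, true)] : FP H)
        | Some g => ([:: (Some (f g), true)] : FP H) end).

Definition in_Z1 (L : cgrp) (b : cG L 1) : Prop :=
  geqv (gmul (cof 1 2 b) (cof 1 0 b)) (cof 1 1 b).

(* bseq L b n = b_(n+1): b_1 = b, b_(n+1) = d^(n+1)(b_n) *)
Fixpoint bseq (L : cgrp) (b : cG L 1) (n : nat) : cG L n.+1 :=
  match n return cG L n.+1 with
  | 0 => b
  | m.+1 => cof m.+1 m.+2 (bseq b m)
  end.

Definition Lb_cof0 (L : cgrp) (b : cG L 1) (n : nat) : FP (cG L n) -> FP (cG L n.+1) :=
  @wext _ (FP (cG L n.+1)) (fun a : option (cG L n) => match a with
        | None => ([:: (None, true); (Some (bseq b n), true)] : FP (cG L n.+1))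
        | Some g => ([:: (Some (cof n 0 g), true)] : FP (cG L n.+1)) end).

Definition Lb (L : cgrp) (b : cG L 1) : cgrp :=
  @CGrp (fun n => FP (cG L n))
    (fun n i => if i == 0 then @Lb_cof0 L b n else idstar_map (@cof L n i))
    (fun n i => idstar_map (@codeg L n i)).
Arguments Lb : clear implicits.

Definition iota_b (L : cgrp) (b : cG L 1) : cmap L (Lb L b) :=
  fun n g => ([:: (Some g, true)] : FP (cG L n)).

Definition idstar (C D : cgrp) (b' : cG C 1) (b : cG D 1) (h : cmap C D) :
    cmap (Lb C b') (Lb D b) :=
  fun n => idstar_map (h n).
Arguments idstar {C D} b' b h n _.

Definition a1 : cG Fc 1 := fgen 1 1.
Definition Fplus : cgrp := Lb Fc a1.
Definition iota_plus : cmap Fc Fplus := iota_b a1.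

(* L^b is obtained from L by freely adjoining one element a_0 in each degree,
   subject only to d^i a_0 = a_0 (i > 0), d^0 a_0 = a_0 b_(n+1) and
   s^i a_0 = a_0; the cosimplicial identities survive these relations
   exactly because b is a 1-cocycle.  Hence a cosimplicial morphism out of
   L^b is the same thing as a morphism v out of L together with elements x_n
   obeying the three relations.  Given u : F^+ -> M and v : L -> M that agree
   on F, the elements x_n := u(a_0) obey them, since u(a_1-sequence) =
   v(h(a_1-sequence)) = v(b-sequence); this yields the unique filler of the
   square.  Nothing about F is used beyond a_1 being a cocycle, so the square
   is a pushout for any cosimplicial C with a cocycle c and h(c) = b. *)
From Pilot Require Import Defs.
From mathcomp Require Import all_boot zify.
From Stdlib Require Import Setoid Morphisms.
Set Implicit Arguments. Unset Strict Implicit. Unset Printing Implicit Defensive.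

(* Making [is_group] a class lets setoid rewriting find the group structure
   of each carrier. *)
Existing Class is_group.
Arguments gmulA {G _} x y z.
Arguments gmul1l {G _} x.
Arguments gmul1r {G _} x.
Arguments gmulVl {G _} x.
Arguments gmulVr {G _} x.

Local Notation "x ≡ y" := (geqv x y) (at level 70, no associativity).
Local Notation "x ⋅ y" := (gmul x y) (at level 40, left associativity).

#[global] Instance geqv_equiv (G : grp) {HG : is_group G} : Equivalence (@geqv G).
Proof. split; [exact: geq_refl | exact: geq_sym | exact: geq_trans]. Qed.

#[global] Instance gmul_Proper (G : grp) {HG : is_group G} :
  Proper (@geqv G ==> @geqv G ==> @geqv G) (@gmul G).
Proof. by move=> x x' E y y' E'; apply: gmul_proper. Qed.

#[global] Instance ginv_Proper (G : grp) {HG : is_group G} :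
  Proper (@geqv G ==> @geqv G) (@ginv G).
Proof. by move=> x x' E; apply: ginv_proper. Qed.

#[global] Hint Extern 0 (geqv _ _) => reflexivity : core.

Section GroupTheory.
Context (G : grp) {HG : is_group G}.
Implicit Types x y z : G.

Lemma gmulKV x y : ginv x ⋅ (x ⋅ y) ≡ y.
Proof. by rewrite -gmulA gmulVl gmul1l. Qed.

Lemma gmulVK x y : x ⋅ (ginv x ⋅ y) ≡ y.
Proof. by rewrite -gmulA gmulVr gmul1l. Qed.

Lemma gmulI x y z : x ⋅ y ≡ x ⋅ z -> y ≡ z.
Proof. by move=> E; rewrite -(gmulKV x y) E gmulKV. Qed.

Lemma gmulIr x y z : x ⋅ z ≡ y ⋅ z -> x ≡ y.
Proof. by move=> E; rewrite -(gmul1r x) -(gmulVr z) -gmulA E gmulA gmulVr gmul1r. Qed.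

Lemma ginv_unique x y : x ⋅ y ≡ gone -> y ≡ ginv x.
Proof. by move=> E; apply: (gmulI (x := x)); rewrite E gmulVr. Qed.

Lemma gidem_one x : x ⋅ x ≡ x -> x ≡ gone.
Proof. by move=> E; apply: (gmulI (x := x)); rewrite E gmul1r. Qed.

End GroupTheory.

Section Homomorphisms.
Context (G H : grp) {HG : is_group G} {HH : is_group H} (f : G -> H) (fH : is_hom f).

Lemma homP x y : x ≡ y -> f x ≡ f y. Proof. exact: (proj1 fH). Qed.
Lemma homM x y : f (x ⋅ y) ≡ f x ⋅ f y. Proof. exact: (proj2 fH). Qed.

Lemma hom1 : f gone ≡ gone.
Proof. by apply: gidem_one; rewrite -homM; apply: homP; rewrite gmul1l. Qed.

Lemma homV x : f (ginv x) ≡ ginv (f x).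
Proof. by apply: ginv_unique; rewrite -homM -hom1; apply: homP; rewrite gmulVr. Qed.

End Homomorphisms.

Lemma hom_comp (A B C : grp) {HB : is_group B} {HC : is_group C}
    (f : A -> B) (g : B -> C) :
  is_hom f -> is_hom g -> is_hom (fun x => g (f x)).
Proof.
move=> fH gH; split=> [x y E|x y]; first by apply: (homP gH); apply: (homP fH).
by rewrite (homP gH (homM fH x y)) (homM gH).
Qed.

Lemma hom_id (G : grp) {HG : is_group G} : is_hom (@id G).
Proof. by split. Qed.

(* Both [Fgrp n] and [FP G] are of this shape: words under concatenation,
   modulo a congruence containing free cancellation. *)
Definition wgrp (A : Type) (R : seq (A * bool) -> seq (A * bool) -> Prop) : grp :=
  @Grp (seq (A * bool)) R cat (@winv A) [::].

Section WordGroup.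
Variables (A : Type) (R : seq (A * bool) -> seq (A * bool) -> Prop).
Hypotheses (Rrefl : forall w, R w w) (Rsym : forall w w', R w w' -> R w' w)
  (Rtrans : forall w1 w2 w3, R w1 w2 -> R w2 w3 -> R w1 w3)
  (Rcat : forall u v w w', R w w' -> R (u ++ w ++ v) (u ++ w' ++ v))
  (Rcancel : forall u v a s, R (u ++ (a, s) :: (a, ~~ s) :: v) (u ++ v)).

Lemma winv_cons (a : A * bool) w : winv (a :: w) = winv w ++ [:: (a.1, ~~ a.2)].
Proof. by rewrite /winv /= rev_cons cats1. Qed.

Lemma wgrp_group : is_group (wgrp R).
Proof.
have Rmul x x' y y' : R x x' -> R y y' -> R (x ++ y) (x' ++ y').
  move=> Ex Ey; apply: (Rtrans (w2 := x' ++ y)); first by have := Rcat [::] y Ex.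
  by have := Rcat x' [::] Ey; rewrite !cats0.
have mulVw w : R (winv w ++ w) [::].
  elim: w => [|[a s] w IH] //=; rewrite winv_cons /= -catA /=.
  by apply: Rtrans IH; have := Rcancel (winv w) w a (~~ s); rewrite negbK.
have mulwV w : R (w ++ winv w) [::].
  elim: w => [|[a s] w IH] //=; rewrite winv_cons /= catA.
  apply: (Rtrans (w2 := [:: (a, s)] ++ [::] ++ [:: (a, ~~ s)])); last exact: (Rcancel [::]).
  by have := Rcat [:: (a, s)] [:: (a, ~~ s)] IH; rewrite /= -catA.
split=> //=.
- move=> x x' E; apply: (Rtrans (w2 := winv x ++ (x' ++ winv x'))).
    by have := Rmul _ _ _ _ (Rrefl (winv x)) (Rsym (mulwV x')); rewrite cats0.
  apply: (Rtrans (w2 := winv x ++ (x ++ winv x'))).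
    exact: Rmul (Rrefl _) (Rmul _ _ _ _ (Rsym E) (Rrefl _)).
  by rewrite catA; apply: Rmul (mulVw x) (Rrefl _).
- by move=> x y z; rewrite catA.
- by move=> x; rewrite cats0.
Qed.

End WordGroup.

Lemma frel_cat (A : Type) (u v w w' : seq (A * bool)) :
  Defs.frel w w' -> Defs.frel (u ++ w ++ v) (u ++ w' ++ v).
Proof.
have E u0 x : u ++ (u0 ++ x) ++ v = (u ++ u0) ++ (x ++ v) by rewrite !catA.
elim=> {w w'}; [by constructor|by constructor|by econstructor; eauto|].
by move=> u0 v0 a s; rewrite !E; constructor.
Qed.

Lemma prel_cat (G : grp) (u v w w' : seq (option G * bool)) :
  prel w w' -> prel (u ++ w ++ v) (u ++ w' ++ v).
Proof.
have E u0 x : u ++ (u0 ++ x) ++ v = (u ++ u0) ++ (x ++ v) by rewrite !catA.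
elim=> {w w'}; [by constructor|by constructor|by econstructor; eauto|..];
  by move=> *; rewrite !E; constructor.
Qed.

#[global] Instance Fgrp_group n : is_group (Fgrp n).
Proof. apply: wgrp_group; [exact: fr_refl|exact: fr_sym|exact: fr_trans|exact: frel_cat|exact: fr_cancel]. Qed.

#[global] Instance FP_group (G : grp) : is_group (FP G).
Proof. apply: wgrp_group; [exact: pr_refl|exact: pr_sym|exact: pr_trans|exact: prel_cat|exact: pr_cancel]. Qed.

Section WordExtension.
Context (A : Type) (H : grp) {HH : is_group H} (phi : A -> H).

Lemma wext_cat x y : wext phi (x ++ y) ≡ wext phi x ⋅ wext phi y.
Proof. by elim: x => [|[a s] x IH] /=; rewrite ?gmul1l // IH gmulA. Qed.

Lemma wext1 a : wext phi [:: (a, true)] ≡ phi a.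
Proof. by rewrite /= gmul1r. Qed.

Lemma wext_cancel u v a s :
  wext phi (u ++ (a, s) :: (a, ~~ s) :: v) ≡ wext phi (u ++ v).
Proof. by rewrite !wext_cat /=; case: s; rewrite /= ?gmulKV ?gmulVK. Qed.

End WordExtension.

Lemma wext_ext (A : Type) (H : grp) (phi psi : A -> H) w :
  (forall a, phi a = psi a) -> wext phi w = wext psi w.
Proof. by move=> E; elim: w => [|[a s] w IH] //=; rewrite E IH. Qed.

Lemma Fgrp_wext_hom n (H : grp) {HH : is_group H} (phi : 'I_n -> H) :
  is_hom (wext phi : Fgrp n -> H).
Proof.
split; last exact: wext_cat.
move=> x y /=; elim=> {x y}; [by []|by symmetry|by move=> ? ? ? _ -> _ ->|exact: wext_cancel].
Qed.

Lemma FP_wext_hom (G H : grp) {HG : is_group G} {HH : is_group H}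
    (phi : option G -> H) :
  is_hom (fun g => phi (Some g)) -> is_hom (wext phi : FP G -> H).
Proof.
move=> phiH; split; last exact: wext_cat.
move=> x y /=; elim=> {x y}; [by []|by symmetry|by move=> ? ? ? _ -> _ ->|exact: wext_cancel|..];
  move=> u v *; rewrite !wext_cat /=; apply: gmul_Proper => //.
- by rewrite -gmulA (homM phiH).
- by rewrite (hom1 phiH) gmul1l.
- by rewrite (homV phiH).
- by rewrite (homP phiH).
Qed.

Lemma wgrp_hom_ext (A : Type) (R : seq (A * bool) -> seq (A * bool) -> Prop)
    {HW : is_group (wgrp R)} (H : grp) {HH : is_group H} (f g : wgrp R -> H) :
  is_hom f -> is_hom g -> (forall a, f [:: (a, true)] ≡ g [:: (a, true)]) ->
  forall x, f x ≡ g x.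
Proof.
move=> fH gH E; elim=> [|[a s] x IH]; first by rewrite (hom1 fH) (hom1 gH).
have -> : (a, s) :: x = gmul ([:: (a, s)] : wgrp R) x by [].
rewrite (homM fH) (homM gH) IH; case: s; first by rewrite E.
have -> : [:: (a, false)] = ginv ([:: (a, true)] : wgrp R) by [].
by rewrite (homV fH) (homV gH) E.
Qed.

Lemma Fgrp_hom_ext n (H : grp) {HH : is_group H} (f g : Fgrp n -> H) :
  is_hom f -> is_hom g -> (forall o, f [:: (o, true)] ≡ g [:: (o, true)]) ->
  forall x, f x ≡ g x.
Proof. exact: (@wgrp_hom_ext _ _ (Fgrp_group n)). Qed.

Definition fp_in (G : grp) (g : G) : FP G := [:: (Some g, true)].
Definition a0 {G : grp} : FP G := [:: (None, true)].

Lemma FP_hom_ext (G H : grp) {HH : is_group H} (f g : FP G -> H) :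
  is_hom f -> is_hom g -> (forall x, f (fp_in x) ≡ g (fp_in x)) -> f a0 ≡ g a0 ->
  forall x, f x ≡ g x.
Proof. by move=> fH gH Ein E0; apply: (@wgrp_hom_ext _ _ (FP_group G)) => // -[]. Qed.

Lemma fp_in_hom (G : grp) {HG : is_group G} : is_hom (@fp_in G).
Proof. by split=> [x y E|x y]; [apply: (pr_eq [::] [::] E)|apply: (pr_sym (pr_mul [::] [::] x y))]. Qed.

Section IdStar.
Context (G H : grp) (f : G -> H).

Lemma idstar_map_hom {HG : is_group G} {HH : is_group H} :
  is_hom f -> is_hom (idstar_map f).
Proof. by move=> fH; apply: FP_wext_hom; apply: hom_comp fH fp_in_hom. Qed.

Lemma idstar_map_in x : idstar_map f (fp_in x) ≡ fp_in (f x).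
Proof. exact: wext1. Qed.

Lemma idstar_map_a0 : idstar_map f a0 ≡ a0.
Proof. exact: wext1. Qed.

End IdStar.

(* The free cosimplicial group: every structure map of [F] sends each
   generator to a word in generators, so it is a "substitution"
   [Fsubst sigma] for an index map [sigma : nat -> seq nat], and the
   cosimplicial identities become identities between index maps. *)
Definition fgens m (s : seq nat) : Fgrp m := flatten (map (fgen m) s).

Definition Fsubst n m (sigma : nat -> seq nat) : Fgrp n -> Fgrp m :=
  wext (fun o : 'I_n => fgens m (sigma o.+1)).

Definition kcomp (tau sigma : nat -> seq nat) (j : nat) : seq nat :=
  flatten (map tau (sigma j)).

Definition cofidx i j : seq nat :=
  if j < i then [:: j] else if j == i then [:: j; j.+1] else [:: j.+1].

Definition codegidx i j : seq nat :=
  if j <= i then [:: j] else if j == i.+1 then [::] else [:: j.-1].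

(* Only indices [1 <= j <= n] name generators of [F_n]: [fgen] sends the others to [e]. *)
Definition idx_range n (sigma : nat -> seq nat) m : Prop :=
  forall j, 0 < j <= n -> all (fun k => 0 < k <= m) (sigma j).

Lemma fgens_cat m s t : fgens m (s ++ t) = fgens m s ++ fgens m t.
Proof. by rewrite /fgens map_cat flatten_cat. Qed.

Lemma fgens1 m (o : 'I_m) : fgens m [:: o.+1] = [:: (o, true)].
Proof. by rewrite /fgens /= cats0 valK. Qed.

Lemma Fsubst_hom n m sigma : is_hom (@Fsubst n m sigma).
Proof. exact: Fgrp_wext_hom. Qed.

Lemma Fsubst_fgens n m sigma s : all (fun k => 0 < k <= n) s ->
  Fsubst m sigma (fgens n s) ≡ fgens m (flatten (map sigma s)).
Proof.
elim: s => [|[|j] s IH] sR; [by []|by case/andP: sR|].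
case/andP: sR => ltjn /IH {}IH.
have -> : fgens n (j.+1 :: s) = ([:: (Ordinal ltjn, true)] : Fgrp n) ⋅ fgens n s.
  by rewrite -(fgens1 (Ordinal ltjn)) -[_ ⋅ _]/(_ ++ _) -fgens_cat.
have -> : flatten (map sigma (j.+1 :: s)) = sigma j.+1 ++ flatten (map sigma s) by [].
by rewrite (homM (Fsubst_hom _ _ _)) IH /Fsubst wext1 fgens_cat.
Qed.

Lemma Fsubst_comp n m p sigma tau : idx_range n sigma m ->
  forall x, @Fsubst m p tau (@Fsubst n m sigma x) ≡ Fsubst p (kcomp tau sigma) x.
Proof.
move=> sigmaR; apply: Fgrp_hom_ext; [exact: hom_comp (Fsubst_hom _ _ _) (Fsubst_hom _ _ _)|exact: Fsubst_hom|].
move=> o; rewrite (homP (Fsubst_hom _ _ _) (wext1 _ _)) Fsubst_fgens.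
  by rewrite /Fsubst wext1.
by apply: sigmaR; rewrite ltn_ord.
Qed.

Lemma Fsubst_eq n m sigma tau : (forall j, 0 < j <= n -> sigma j = tau j) ->
  forall x, @Fsubst n m sigma x = Fsubst m tau x.
Proof. by move=> E x; apply: wext_ext => o; rewrite E // ltn_ord. Qed.

Lemma Fsubst_unit n x : Fsubst n (fun j => [:: j]) x ≡ x.
Proof.
apply: (Fgrp_hom_ext (g := id) (Fsubst_hom _ _ _) hom_id) => o.
by rewrite /Fsubst wext1 fgens1.
Qed.

Lemma Fsubst_comp_eq n m1 m2 p sigma1 tau1 sigma2 tau2 :
  idx_range n sigma1 m1 -> idx_range n sigma2 m2 ->
  (forall j, 0 < j <= n -> kcomp tau1 sigma1 j = kcomp tau2 sigma2 j) ->
  forall x : Fgrp n, @Fsubst m1 p tau1 (Fsubst m1 sigma1 x) ≡ @Fsubst m2 p tau2 (Fsubst m2 sigma2 x).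
Proof. by move=> R1 R2 E x; rewrite !Fsubst_comp // (Fsubst_eq _ E). Qed.

Lemma Fsubst_comp_id n m sigma tau : idx_range n sigma m ->
  (forall j, 0 < j <= n -> kcomp tau sigma j = [:: j]) ->
  forall x : Fgrp n, @Fsubst m n tau (Fsubst m sigma x) ≡ x.
Proof. by move=> R E x; rewrite Fsubst_comp // (Fsubst_eq _ E) Fsubst_unit. Qed.

Lemma Fc_cofE n i x : @cof Fc n i x = Fsubst n.+1 (cofidx i) x.
Proof.
apply: wext_ext => o; rewrite /fgens /cofidx.
by case: ifP => _ /=; rewrite ?cats0 //; case: ifP => _ /=; rewrite ?cats0.
Qed.

Lemma Fc_codegE n i x : @codeg Fc n i x = Fsubst n (codegidx i) x.
Proof.
apply: wext_ext => o; rewrite /fgens /codegidx.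
by case: ifP => _ /=; rewrite ?cats0 //; case: ifP => _ /=; rewrite ?cats0.
Qed.

Lemma Fc_cosimplicial : is_cosimplicial_group Fc.
Proof.
split; try by move=> *; apply: Fgrp_wext_hom.
- exact: Fgrp_group.
all: move=> n *; rewrite ?Fc_cofE ?Fc_codegE.
all: first [apply: Fsubst_comp_eq | apply: Fsubst_comp_id].
all: move=> k ?; rewrite /kcomp /cofidx /codegidx.
all: repeat (simpl; match goal with
  | |- context [if ?c then _ else _] => case: (boolP c) => ?
  end); simpl; try (exfalso; lia); repeat f_equal; lia.
Qed.

Lemma a1_in_Z1 : in_Z1 a1.
Proof.
have -> : a1 = fgens 1 [:: 1] by rewrite /fgens /= cats0.
by rewrite /in_Z1 !Fc_cofE !Fsubst_fgens // -[_ ⋅ _]/(_ ++ _) -fgens_cat.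
Qed.

Section LbConstruction.
Variables (L : cgrp) (b : cG L 1).
Hypothesis HL : is_cosimplicial_group L.
Let L_group n : is_group (cG L n) := cs_group HL n.
#[local] Existing Instance L_group.

Lemma cof_bseq n j : 2 <= j <= n.+2 -> cof n.+1 j (Defs.bseq b n) ≡ Defs.bseq b n.+1.
Proof.
elim: n j => [|n IH] j rj; first by have -> : j = 2 by lia.
case: (ltngtP j n.+3) => [ltj|gtj|-> //]; last lia.
have dH : is_hom (@cof L n.+2 n.+3) by apply: (cs_cof_hom HL).
have IHj : cof n.+1 j (Defs.bseq b n) ≡ Defs.bseq b n.+1 by apply: IH; lia.
by rewrite /= -(cs_dd HL (i := j) (j := n.+3)) // (homP dH IHj).
Qed.

Lemma codeg_bseq n j : 1 <= j <= n.+1 -> codeg n.+1 j (Defs.bseq b n.+1) ≡ Defs.bseq b n.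
Proof.
elim: n j => [|n IH] j rj.
  have -> : j = 1 by lia.
  exact: (cs_sd_eqS HL).
case: (ltngtP j n.+2) => [ltj|gtj|->]; [|lia|exact: (cs_sd_eqS HL)].
have dH : is_hom (@cof L n.+1 n.+2) by apply: (cs_cof_hom HL).
have IHj : codeg n.+1 j (Defs.bseq b n.+1) ≡ Defs.bseq b n by apply: IH; lia.
by rewrite /= (cs_sd_gt HL (i := n.+3) (j := j)) ?(homP dH IHj) //; lia.
Qed.

Hypothesis Hb : in_Z1 b.

Lemma cof1_bseq n : cof n.+1 1 (Defs.bseq b n) ≡ Defs.bseq b n.+1 ⋅ cof n.+1 0 (Defs.bseq b n).
Proof.
elim: n => [|n IH]; first by symmetry; apply: Hb.
have cofH : is_hom (@cof L n.+2 n.+3) by apply: (cs_cof_hom HL).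
rewrite /= -(cs_dd HL (i := 1) (j := n.+3)) // (homP cofH IH) (homM cofH).
by rewrite (cs_dd HL (i := 0) (j := n.+3)).
Qed.

(* Applying s^0 to the cocycle identity d^2 b d^0 b = d^1 b gives d^1 s^0 b = e. *)
Lemma codeg0_bseq n : codeg n 0 (Defs.bseq b n) ≡ gone.
Proof.
elim: n => [|n IH]; last first.
  have dH : is_hom (@cof L n n.+1) by apply: (cs_cof_hom HL).
  by rewrite /= (cs_sd_gt HL (i := n.+2)) // (homP dH IH) (hom1 dH).
have s0H : is_hom (@codeg L 1 0) by apply: (cs_codeg_hom HL).
have d1s0b : cof 0 1 (codeg 0 0 b) ≡ gone.
  have E := homP s0H Hb; rewrite (homM s0H) in E.
  rewrite (cs_sd_gt HL (i := 2)) // (cs_sd_eq HL (j := 0)) // (cs_sd_eqS HL (j := 0)) // in E.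
  by apply: (gmulIr (z := b)); rewrite gmul1l.
have s0H' : is_hom (@codeg L 0 0) by apply: (cs_codeg_hom HL).
rewrite -(cs_sd_eqS HL (n := 0) (j := 0) (codeg 0 0 b)) //.
by rewrite (homP s0H' d1s0b) (hom1 s0H').
Qed.

Lemma Lb_cofE n i : @cof (Lb L b) n i =
  if i == 0 then @Lb_cof0 L b n else idstar_map (@cof L n i).
Proof. by []. Qed.

Lemma Lb_cof_hom n i : i <= n.+1 -> is_hom (@cof (Lb L b) n i).
Proof.
rewrite Lb_cofE => ?; case: eqP => _; last by apply: idstar_map_hom; apply: (cs_cof_hom HL).
apply: FP_wext_hom; apply: hom_comp fp_in_hom; exact: (cs_cof_hom HL).
Qed.

Lemma Lb_codeg_hom n i : i <= n -> is_hom (@codeg (Lb L b) n i).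
Proof. by move=> ?; apply: idstar_map_hom; apply: (cs_codeg_hom HL). Qed.

Lemma Lb_cof_in n i g : @cof (Lb L b) n i (fp_in g) ≡ fp_in (cof n i g).
Proof. by rewrite Lb_cofE; case: eqP => [->|_]; apply: wext1. Qed.

Lemma Lb_cof0_a0 n : @cof (Lb L b) n 0 a0 ≡ a0 ⋅ fp_in (Defs.bseq b n).
Proof. exact: wext1. Qed.

Lemma Lb_cofS_a0 n i : @cof (Lb L b) n i.+1 a0 ≡ a0.
Proof. exact: wext1. Qed.

Lemma Lb_codeg_in n i g : @codeg (Lb L b) n i (fp_in g) ≡ fp_in (codeg n i g).
Proof. exact: wext1. Qed.

Lemma Lb_codeg_a0 n i : @codeg (Lb L b) n i a0 ≡ a0.
Proof. exact: wext1. Qed.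

Ltac Lb_hom := first [ apply: hom_id
  | apply: hom_comp; (apply: Lb_cof_hom || apply: Lb_codeg_hom); lia
  | (apply: Lb_cof_hom || apply: Lb_codeg_hom); lia ].

Lemma Lb_dd n i j x : i <= j -> j <= n.+1 ->
  @cof (Lb L b) n.+1 j.+1 (cof n i x) ≡ cof n.+1 i (cof n j x).
Proof.
move=> lij ljn; move: x; apply: FP_hom_ext; try Lb_hom.
  move=> g; rewrite (homP (Lb_cof_hom _) (Lb_cof_in _ _)) ?(homP (Lb_cof_hom _) (Lb_cof_in _ _)) ?Lb_cof_in; try lia.
  by apply: (homP fp_in_hom); apply: (cs_dd HL).
case: j lij ljn => [|j] lij ljn.
  have -> : i = 0 by lia.
  rewrite (homP (Lb_cof_hom _) (Lb_cof0_a0 _)) // (homM (Lb_cof_hom _)) // Lb_cofS_a0 Lb_cof_in.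
  rewrite (homP (Lb_cof_hom _) (Lb_cof0_a0 _)) // (homM (Lb_cof_hom _)) // Lb_cof0_a0 Lb_cof_in.
  by rewrite (homP fp_in_hom (cof1_bseq n)) (homM fp_in_hom) gmulA.
case: i lij => [|i] lij.
  rewrite (homP (Lb_cof_hom _) (Lb_cof0_a0 _)) // (homM (Lb_cof_hom _)) // Lb_cofS_a0 Lb_cof_in.
  rewrite (homP (Lb_cof_hom _) (Lb_cofS_a0 _ _)) // Lb_cof0_a0.
  by rewrite (homP fp_in_hom (cof_bseq _)) //; lia.
by rewrite !(homP (Lb_cof_hom _) (Lb_cofS_a0 _ _)) ?Lb_cofS_a0 //; lia.
Qed.

Lemma Lb_sd_lt n i j x : i <= j -> j <= n ->
  @codeg (Lb L b) n.+1 j.+1 (cof n.+1 i x) ≡ cof n i (codeg n j x).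
Proof.
move=> lij ljn; move: x; apply: FP_hom_ext; try Lb_hom.
  move=> g; rewrite (homP (Lb_codeg_hom _) (Lb_cof_in _ _)) ?(homP (Lb_cof_hom _) (Lb_codeg_in _ _)); try lia.
  rewrite Lb_codeg_in Lb_cof_in.
  by apply: (homP fp_in_hom); apply: (cs_sd_lt HL).
rewrite (homP (Lb_cof_hom _) (Lb_codeg_a0 _ _)); last lia.
case: i lij => [|i] lij.
  rewrite (homP (Lb_codeg_hom _) (Lb_cof0_a0 _)) ?(homM (Lb_codeg_hom _)); try lia.
  by rewrite Lb_codeg_a0 Lb_codeg_in Lb_cof0_a0 (homP fp_in_hom (codeg_bseq _)) //; lia.
by rewrite (homP (Lb_codeg_hom _) (Lb_cofS_a0 _ _)) ?Lb_codeg_a0 ?Lb_cofS_a0 //; lia.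
Qed.

Lemma Lb_sd_eq n j x : j <= n -> @codeg (Lb L b) n j (cof n j x) ≡ x.
Proof.
move=> ljn; move: x; apply: FP_hom_ext; try Lb_hom.
  move=> g; rewrite (homP (Lb_codeg_hom _) (Lb_cof_in _ _)) // Lb_codeg_in.
  by apply: (homP fp_in_hom); apply: (cs_sd_eq HL).
case: j ljn => [|j] ljn.
  rewrite (homP (Lb_codeg_hom _) (Lb_cof0_a0 _)) // (homM (Lb_codeg_hom _)) //.
  by rewrite Lb_codeg_a0 Lb_codeg_in (homP fp_in_hom (codeg0_bseq _)) (hom1 fp_in_hom) gmul1r.
by rewrite (homP (Lb_codeg_hom _) (Lb_cofS_a0 _ _)) ?Lb_codeg_a0.
Qed.

Lemma Lb_sd_eqS n j x : j <= n -> @codeg (Lb L b) n j (cof n j.+1 x) ≡ x.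
Proof.
move=> ljn; move: x; apply: FP_hom_ext; try Lb_hom.
  move=> g; rewrite (homP (Lb_codeg_hom _) (Lb_cof_in _ _)) // Lb_codeg_in.
  by apply: (homP fp_in_hom); apply: (cs_sd_eqS HL).
by rewrite (homP (Lb_codeg_hom _) (Lb_cofS_a0 _ _)) ?Lb_codeg_a0.
Qed.

Lemma Lb_sd_gt n i j x : j < i -> i <= n.+1 ->
  @codeg (Lb L b) n.+1 j (cof n.+1 i.+1 x) ≡ cof n i (codeg n j x).
Proof.
move=> lji lin; move: x; apply: FP_hom_ext; try Lb_hom.
  move=> g; rewrite (homP (Lb_codeg_hom _) (Lb_cof_in _ _)) ?(homP (Lb_cof_hom _) (Lb_codeg_in _ _)); try lia.
  rewrite Lb_codeg_in Lb_cof_in.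
  by apply: (homP fp_in_hom); apply: (cs_sd_gt HL).
(* On [a_0] both sides compute to the word [a_0]. *)
by case: i lji lin.
Qed.

Lemma Lb_ss n i j x : i <= j -> j <= n ->
  @codeg (Lb L b) n j (codeg n.+1 i x) ≡ codeg n i (codeg n.+1 j.+1 x).
Proof.
move=> lij ljn; move: x; apply: FP_hom_ext; try Lb_hom.
  move=> g; rewrite !(homP (Lb_codeg_hom _) (Lb_codeg_in _ _)) ?Lb_codeg_in; try lia.
  by apply: (homP fp_in_hom); apply: (cs_ss HL).
by rewrite !(homP (Lb_codeg_hom _) (Lb_codeg_a0 _ _)) ?Lb_codeg_a0 //; lia.
Qed.

Lemma Lb_cosimplicial : is_cosimplicial_group (Lb L b).
Proof.
split.
- by move=> n; apply: FP_group.
- exact: Lb_cof_hom.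
- exact: Lb_codeg_hom.
- by move=> n i [|j] x //= ? ?; apply: Lb_dd.
- by move=> n i [|j] x //= ? ?; apply: Lb_sd_lt.
- exact: Lb_sd_eq.
- exact: Lb_sd_eqS.
- by move=> n [|i] j x //= ? ?; apply: Lb_sd_gt.
- exact: Lb_ss.
Qed.

End LbConstruction.

Lemma cmorph_hom (C D : cgrp) (f : cmap C D) : is_cmorph f -> forall n, is_hom (f n).
Proof. by case. Qed.

Lemma ccomp_cmorph (A B C : cgrp) (f : cmap A B) (g : cmap B C) :
  is_cosimplicial_group B -> is_cosimplicial_group C ->
  is_cmorph f -> is_cmorph g -> is_cmorph (ccomp g f).
Proof.
move=> HB HC [fH [fcof fcodeg]] [gH [gcof gcodeg]].
have IB n : is_group (cG B n) := cs_group HB n.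
have IC n : is_group (cG C n) := cs_group HC n.
split; first by move=> n; apply: hom_comp.
split=> n i y ?; rewrite /ccomp.
- by rewrite (homP (gH _) (fcof _ _ _ _)) // gcof.
- by rewrite (homP (gH _) (fcodeg _ _ _ _)) // gcodeg.
Qed.

Lemma iota_b_cmorph (L : cgrp) {b : cG L 1} :
  is_cosimplicial_group L -> is_cmorph (iota_b b).
Proof.
move=> HL; have IL n : is_group (cG L n) := cs_group HL n.
split; first by move=> n; apply: fp_in_hom.
by split=> n i g _; symmetry; [apply: Lb_cof_in|apply: Lb_codeg_in].
Qed.

Lemma cmorph_bseq (C D : cgrp) (f : cmap C D) (c : cG C 1) (d : cG D 1) :
  is_cosimplicial_group D -> is_cmorph f -> f 1 c ≡ d ->
  forall n, f n.+1 (Defs.bseq c n) ≡ Defs.bseq d n.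
Proof.
move=> HD [_ [fcof _]] fcd; have ID n : is_group (cG D n) := cs_group HD n.
elim=> [|n IH] //=; rewrite fcof //.
by apply: (homP (cs_cof_hom HD _)).
Qed.

Definition Lb_lift (L M : cgrp) (b : cG L 1) (v : cmap L M) (x : forall n, cG M n) :
    cmap (Lb L b) M :=
  fun n => wext (fun a => if a is Some g then v n g else x n).
Arguments Lb_lift {L M} b v x.

Section LbLift.
Variables (L M : cgrp) (b : cG L 1).
Context {L_group : forall n, is_group (cG L n)} {M_group : forall n, is_group (cG M n)}.
Variables (v : cmap L M) (x : forall n, cG M n).
Arguments v : clear implicits.
Arguments x : clear implicits.
Hypothesis vH : is_cmorph v.

Lemma Lb_lift_hom n : is_hom (Lb_lift b v x n).
Proof. by apply: FP_wext_hom; apply: cmorph_hom vH n. Qed.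

Lemma Lb_lift_in n g : Lb_lift b v x n (fp_in g) ≡ v n g.
Proof. exact: wext1. Qed.

Lemma Lb_lift_a0 n : Lb_lift b v x n a0 ≡ x n.
Proof. exact: wext1. Qed.

Lemma Lb_lift_unique (w : cmap (Lb L b) M) : (forall n, is_hom (w n)) ->
  (forall n g, w n (fp_in g) ≡ v n g) -> (forall n, w n a0 ≡ x n) ->
  cmap_eq w (Lb_lift b v x).
Proof.
move=> wH win wa0 n; apply: FP_hom_ext.
- exact: wH.
- exact: Lb_lift_hom.
- by move=> g; rewrite win Lb_lift_in.
- by rewrite wa0 Lb_lift_a0.
Qed.

Hypotheses (HL : is_cosimplicial_group L) (HM : is_cosimplicial_group M).
Hypotheses
  (cof0_x : forall n, cof n 0 (x n) ≡ x n.+1 ⋅ v n.+1 (Defs.bseq b n))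
  (cofS_x : forall n i, i <= n -> cof n i.+1 (x n) ≡ x n.+1)
  (codeg_x : forall n i, i <= n -> codeg n i (x n.+1) ≡ x n).

Lemma Lb_lift_cmorph : is_cmorph (Lb_lift b v x).
Proof.
have [_ [vcof vcodeg]] := vH.
split; first exact: Lb_lift_hom.
split=> n i y ri; move: y; apply: FP_hom_ext.
- by apply: hom_comp (Lb_lift_hom _); apply: Lb_cof_hom.
- by apply: hom_comp (cs_cof_hom HM _) => //; apply: Lb_lift_hom.
- move=> g; rewrite (homP (Lb_lift_hom _) (Lb_cof_in _ _ _)) Lb_lift_in.
  by rewrite (homP (cs_cof_hom HM _) (Lb_lift_in _)) ?vcof.
- rewrite (homP (cs_cof_hom HM _) (Lb_lift_a0 _)) //; case: i ri => [|i] ri.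
    by rewrite (homP (Lb_lift_hom _) (Lb_cof0_a0 _ _)) (homM (Lb_lift_hom _)) Lb_lift_a0 Lb_lift_in cof0_x.
  by rewrite (homP (Lb_lift_hom _) (Lb_cofS_a0 _ _ _)) Lb_lift_a0 cofS_x.
- by apply: hom_comp (Lb_lift_hom _); apply: Lb_codeg_hom.
- by apply: hom_comp (cs_codeg_hom HM _) => //; apply: Lb_lift_hom.
- move=> g; rewrite (homP (Lb_lift_hom _) (Lb_codeg_in _ _ _)) Lb_lift_in.
  by rewrite (homP (cs_codeg_hom HM _) (Lb_lift_in _)) ?vcodeg.
- by rewrite (homP (Lb_lift_hom _) (Lb_codeg_a0 _ _ _)) Lb_lift_a0 (homP (cs_codeg_hom HM _) (Lb_lift_a0 _)) ?codeg_x.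
Qed.

End LbLift.

Section Pushout.
Variables (C D : cgrp) (c : cG C 1) (d : cG D 1) (h : cmap C D).
Arguments h : clear implicits.
Hypotheses (HC : is_cosimplicial_group C) (HD : is_cosimplicial_group D).
Hypotheses (Hc : in_Z1 c) (Hd : in_Z1 d) (hH : is_cmorph h) (hcd : h 1 c ≡ d).
Let C_group n : is_group (cG C n) := cs_group HC n.
Let D_group n : is_group (cG D n) := cs_group HD n.
#[local] Existing Instances C_group D_group.

Lemma idstar_cmorph : is_cmorph (idstar c d h).
Proof.
(* [idstar c d h] is convertible to [Lb_lift c (ccomp (iota_b d) h) (fun _ => a0)]. *)
apply: (Lb_lift_cmorph (v := ccomp (iota_b d) h) (x := fun n => a0) _ HC (Lb_cosimplicial HD Hd)).
- exact: ccomp_cmorph HD (Lb_cosimplicial HD Hd) hH (iota_b_cmorph HD).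
- move=> n; rewrite Lb_cof0_a0; apply: gmul_Proper => //.
  by symmetry; apply: (homP fp_in_hom (cmorph_bseq HD hH hcd n)).
- by move=> n i _; apply: Lb_cofS_a0.
- by move=> n i _; apply: Lb_codeg_a0.
Qed.

Lemma pushout_lift (M : cgrp) (u : cmap (Lb C c) M) (v : cmap D M) :
  is_cosimplicial_group M -> is_cmorph u -> is_cmorph v ->
  cmap_eq (ccomp u (iota_b c)) (ccomp v h) ->
  exists w : cmap (Lb D d) M,
    [/\ is_cmorph w, cmap_eq (ccomp w (idstar c d h)) u, cmap_eq (ccomp w (iota_b d)) v &
        forall w' : cmap (Lb D d) M, is_cmorph w' ->
          cmap_eq (ccomp w' (idstar c d h)) u -> cmap_eq (ccomp w' (iota_b d)) v ->
          cmap_eq w' w].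
Proof.
move=> HM uH vH uv; have IM n : is_group (cG M n) := cs_group HM n.
have [uhom [ucof ucodeg]] := uH.
pose x n := u n a0.
have wH n : is_hom (Lb_lift d v x n) by apply: Lb_lift_hom.
exists (Lb_lift d v x); split.
- apply: (Lb_lift_cmorph vH HD HM) => [n|n i ?|n i ?].
  + rewrite /x -ucof // (homP (uhom _) (Lb_cof0_a0 _ _)) (homM (uhom _)).
    apply: gmul_Proper => //; transitivity (v n.+1 (h n.+1 (Defs.bseq c n))); first exact: uv.
    exact: (homP (cmorph_hom vH _) (cmorph_bseq HD hH hcd n)).
  + by rewrite /x -ucof // (homP (uhom _) (Lb_cofS_a0 _ _ _)).
  + by rewrite /x -ucodeg // (homP (uhom _) (Lb_codeg_a0 _ _ _)).
- move=> n; apply: FP_hom_ext.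
  + exact: hom_comp (idstar_map_hom (cmorph_hom hH n)) (wH n).
  + exact: uhom.
  + move=> g; rewrite /ccomp (homP (wH n) (idstar_map_in _ _)) Lb_lift_in.
    by symmetry; apply: uv.
  + by rewrite /ccomp (homP (wH n) (idstar_map_a0 _)) Lb_lift_a0.
- by move=> n g; apply: Lb_lift_in.
move=> w' w'H w'u w'v; apply: (Lb_lift_unique vH) => [n|n g|n].
- exact: cmorph_hom w'H n.
- exact: w'v.
- by rewrite /x -(w'u n a0) /ccomp (homP (cmorph_hom w'H n) (idstar_map_a0 _)).
Qed.

Theorem Lb_pushout : is_pushout (iota_b c) h (idstar c d h) (iota_b d).
Proof.
split; first by split=> //; apply: Lb_cosimplicial.
split; first by split; [apply: iota_b_cmorph|by []|apply: idstar_cmorph|apply: iota_b_cmorph].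
split; last by move=> M HM u v uH vH uv; apply: pushout_lift.
by move=> n g; apply: idstar_map_in.
Qed.

End Pushout.

Theorem proposition3p4 (L : cgrp) (b : cG L 1) (h : cmap Fc L) :
  is_cosimplicial_group L -> in_Z1 b ->
  is_cmorph h -> geqv (h 1 a1) b ->
  is_pushout iota_plus h (idstar a1 b h) (iota_b b).
Proof. by move=> HL Hb hH hb; apply: Lb_pushout Fc_cosimplicial HL a1_in_Z1 Hb hH hb. Qed.
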